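(* Let $L$ be a finite distributive lattice, $c(L)$ its set of complemented elements, and for $x\in c(L)$ with complement $x'$ let $L(x):=\{(y,z)\in\widetilde L: y\le x,\ z\le x'\}$. Then $$\widetilde L=\bigcup_{x\in c(L)}L(x)$$ if and only if every connected component of the Hasse diagram of the poset $\mathcal J(L)$ has a unique minimal element (i.e. has a least element).
   Context: $L$ has least element $\bot$ and greatest element $\top$; $x\in L$ is complemented if there is $x'$ with $x\wedge x'=\bot$, $x\vee x'=\top$ (the complement is unique since $L$ is distributive). $\widetilde L:=\{(x,y)\in L^2: x\wedge y=\bot\}$ with the product order. $\mathcal J(L)$ is the set of join-irreducible elements of $L$ (elements covering exactly one element), with the order induced from $L$. *)

From HB Require Import structures.
From mathcomp Require Import all_boot all_order.
Set Implicit Arguments. Unset Strict Implicit. Unset Printing Implicit Defensive.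
Import Order.TTheory.
Local Open Scope order_scope.

Section Defs.
Context {d : Order.disp_t} {L : finTBDistrLatticeType d}.

Definition is_compl (x x' : L) : Prop := x `&` x' = \bot /\ x `|` x' = \top.

Definition complemented (x : L) : Prop := exists x', is_compl x x'.

Definition in_Ltilde (y z : L) : Prop := y `&` z = \bot.

(* (y,z) \in L(x) (x complemented, complement x' -- unique by distributivity) *)
Definition in_Lx (x y z : L) : Prop :=
  exists x', is_compl x x' /\ in_Ltilde y z /\ y <= x /\ z <= x'.

Definition coversb (y x : L) : bool :=
  (y < x) && [forall z : L, ~~ ((y < z) && (z < x))].

Definition join_irr (x : L) : bool := #|[set y : L | coversb y x]| == 1%N.

Definition coverJ (a b : L) : bool :=
  [&& join_irr a, join_irr b, a < b &
      [forall c : L, ~~ [&& join_irr c, a < c & c < b]]].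

Definition hasseJ (a b : L) : bool := coverJ a b || coverJ b a.

Definition same_component (a b : L) : bool := join_irr a && connect hasseJ a b.

Definition minimal_in_component (a m : L) : Prop :=
  same_component a m /\ forall b, same_component a b -> b <= m -> b = m.

End Defs.

From HB Require Import structures.
From mathcomp Require Import all_boot all_order.
Import Order.TTheory.
Local Open Scope order_scope.

(* In a finite distributive lattice L every element is the join
   of the join-irreducibles below it, and join-irreducibles are join-prime.
   Two consequences drive both directions of the theorem:
   (a) a complemented x splits J(L): every join-irreducible lies below exactly
       one of x, x', and comparable join-irreducibles lie on the same side, so
       each component of the Hasse diagram of J(L) is entirely below x or
       entirely below x';
   (b) conversely, for any union P of components, the join of the elements of
       P and the join of the remaining join-irreducibles are complements.
   (=>) Two distinct minimal elements m, m' of one component satisfy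
   m /\ m' = bot; a complemented x with m <= x and m' <= x' would put the
   component on both sides of x by (a).
   (<=) Given y /\ z = bot, let P be the union of the components meeting the
   set of join-irreducibles below y, and take x from (b).  Then y <= x, and
   z <= x' because a join-irreducible below z in such a component would share
   the component's least element with one below y, which lies below y /\ z. *)

(* Extremal elements in finite posets, found by minimising/maximising the size
   of the principal ideal. *)
Section FiniteExtremal.
Context {d : Order.disp_t} {T : finPOrderType d}.

Definition ideal_size (w : T) : nat := #|[set t : T | t <= w]|.

Lemma ideal_size_lt {u w : T} : u < w -> (ideal_size u < ideal_size w)%N.
Proof.
move=> uw; apply: proper_card; rewrite properE; apply/andP; split.
  by apply/subsetP => t; rewrite !inE => tu; exact: le_trans tu (ltW uw).
by apply/subsetPn; exists w; rewrite !inE ?lexx ?(lt_geF uw).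
Qed.

Lemma ex_maximal (P : pred T) u : P u ->
  exists c, P c /\ forall c', P c' -> ~ c < c'.
Proof.
move=> Pu; case: (arg_maxnP ideal_size Pu) => c Pc Hc.
exists c; split => // c' Pc' /ideal_size_lt; apply/negP; rewrite -leqNgt; exact: Hc.
Qed.

Lemma ex_minimal (P : pred T) u : P u ->
  exists c, P c /\ forall c', P c' -> ~ c' < c.
Proof.
move=> Pu; case: (arg_minnP ideal_size Pu) => c Pc Hc.
exists c; split => // c' Pc' /ideal_size_lt; apply/negP; rewrite -leqNgt; exact: Hc.
Qed.

End FiniteExtremal.

Section JoinIrreducibles.
Context {d : Order.disp_t} {L : finTBDistrLatticeType d}.
Implicit Types (x y z u v w j k a b m : L).

Lemma coversP {y x} :
  coversb y x -> y < x /\ forall z, y < z -> z < x -> False.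
Proof. by case/andP => yx /forallP H; split => // z h1 h2; have := H z; rewrite h1 h2. Qed.

Lemma cover_above {u j} : u < j -> exists c, coversb c j /\ u <= c.
Proof.
move=> uj.
have [c [/andP [uc cj] Hc]] :=
  @ex_maximal _ _ (fun c => (u <= c) && (c < j)) u ltac:(by rewrite /= lexx uj).
exists c; split => //; apply/andP; split => //; apply/forallP => t.
apply/negP => /andP [ct tj]; apply: (Hc t) => //.
by rewrite tj (le_trans uc (ltW ct)).
Qed.

(* \bot covers nothing, hence is not join-irreducible. *)
Lemma join_irr_neq0 {j} : join_irr j -> j != \bot.
Proof.
move=> Jj; apply/negP => /eqP j0; move: Jj; rewrite /join_irr.
suff -> : [set y : L | coversb y j] = set0 by rewrite cards0.
by apply/setP => y; rewrite !inE /coversb j0 ltx0.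
Qed.

(* The elements strictly below a join-irreducible form a down-set closed under
   joins: they all lie below its unique lower cover. *)
Lemma join_irr_join {j u v} : join_irr j -> u < j -> v < j -> u `|` v < j.
Proof.
move=> /cards1P [c Ec] uj vj.
have [c1 [C1 uc1]] := cover_above uj; have [c2 [C2 vc2]] := cover_above vj.
have : c1 \in [set y : L | coversb y j] by rewrite inE.
have : c2 \in [set y : L | coversb y j] by rewrite inE.
rewrite Ec !inE => /eqP e2 /eqP e1; subst c1 c2.
have [cj _] := coversP C1.
by apply: le_lt_trans cj; rewrite leUx uc1 vc2.
Qed.

Lemma join_prime {j a b} : join_irr j -> j <= a `|` b -> j <= a \/ j <= b.
Proof.
move=> Jj jab.
have Ej : j = (j `&` a) `|` (j `&` b) by rewrite -meetUr; apply/esym/meet_idPl.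
case: (eqVneq (j `&` a) j) => [ea|na]; first by left; rewrite -ea leIr.
case: (eqVneq (j `&` b) j) => [eb|nb]; first by right; rewrite -eb leIr.
have : (j `&` a) `|` (j `&` b) < j.
  by apply: join_irr_join => //; rewrite lt_neqAle ?na ?nb leIl.
by rewrite -Ej ltxx.
Qed.

Lemma join_prime_big {j} {P : pred L} : join_irr j ->
  j <= \join_(i | P i) i -> exists i, P i /\ j <= i.
Proof.
move=> Jj; apply: (@big_rec _ (fun w => j <= w -> exists i, P i /\ j <= i)).
  by rewrite lex0 (negbTE (join_irr_neq0 Jj)).
move=> i w Pi IH /(join_prime Jj) [ji|jw]; first by exists i.
exact: IH.
Qed.

Lemma join_irr_below_disjoint {j u v} :
  join_irr j -> u `&` v = \bot -> j <= u -> j <= v -> False.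
Proof.
move=> Jj uv ju jv; have : j <= u `&` v by rewrite lexI ju jv.
by rewrite uv lex0 (negbTE (join_irr_neq0 Jj)).
Qed.

(* Every element is the join of the join-irreducibles below it; in order form:
   w <= v as soon as every join-irreducible below w lies below v. *)
Lemma le_by_join_irr w v :
  (forall j, join_irr j -> j <= w -> j <= v) -> w <= v.
Proof.
have [n] := ubnP (ideal_size w); elim: n w => // n IH w /ltnSE size_w Hj.
case: (eqVneq w \bot) => [->|wn0]; first by rewrite le0x.
case Jw: (join_irr w); first exact: Hj.
have [c1 [C1 _]] := @cover_above \bot w ltac:(by rewrite lt0x).
have [c2 C2 c21] : exists2 c2, coversb c2 w & c2 != c1.
  case: (boolP [exists c2, coversb c2 w && (c2 != c1)]).
    by case/existsP => c2 /andP [] ? ?; exists c2.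
  move=> /negP noc2; exfalso; move: Jw; rewrite /join_irr eqn_leq.
  move=> /negbT/negP; apply; apply/andP; split.
    rewrite -(cards1 c1); apply: subset_leq_card; apply/subsetP => t.
    rewrite !inE => tw; apply/negPn/negP => tc1; apply: noc2.
    by apply/existsP; exists t; rewrite tw tc1.
  by apply/card_gt0P; exists c1; rewrite inE.
have [c1w H1] := coversP C1; have [c2w H2] := coversP C2.
have below c : c < w -> c <= v.
  move=> cw; apply: IH; first exact: leq_trans (ideal_size_lt cw) size_w.
  by move=> j Jj jc; apply: Hj => //; exact: le_trans jc (ltW cw).
apply: le_trans (_ : c1 `|` c2 <= v); last by rewrite leUx !below.
case: (eqVneq (c1 `|` c2) w) => [->//|ne].
have lw : c1 `|` c2 < w by rewrite lt_neqAle ne leUx !ltW.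
case: (eqVneq c1 (c1 `|` c2)) => [e|n1].
  by case: (H2 c1) => //; rewrite lt_neqAle c21 e leUr.
by case: (H1 (c1 `|` c2)) => //; rewrite lt_neqAle n1 leUl.
Qed.

Lemma meet_bot_by_join_irr u v :
  (forall k, join_irr k -> k <= u -> k <= v -> False) -> u `&` v = \bot.
Proof.
move=> H; apply/eqP; rewrite -lex0; apply: le_by_join_irr => k Jk.
by rewrite lexI => /andP [ku kv]; case: (H k Jk ku kv).
Qed.

End JoinIrreducibles.

Section HasseDiagram.
Context {d : Order.disp_t} {L : finTBDistrLatticeType d}.
Implicit Types (x y z u v w j k a b m : L).

Lemma hasseJ_sym : symmetric (@hasseJ _ L).
Proof. by move=> a b; rewrite /hasseJ orbC. Qed.

Lemma connect_hasseJC a b : connect (@hasseJ _ L) a b = connect hasseJ b a.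
Proof. exact: (sym_connect_sym hasseJ_sym). Qed.

Lemma connect_join_irr {a m} : join_irr a -> connect (@hasseJ _ L) a m -> join_irr m.
Proof.
move=> Ja Cam.
have cl : closed (@hasseJ _ L) (fun t => join_irr t).
  by move=> u v /orP [] /and4P [Ju Jv _ _]; rewrite !unfold_in /= Ju Jv.
by have := closed_connect cl Cam; rewrite !unfold_in /= Ja.
Qed.

(* Comparable join-irreducibles lie in the same component: climb from k to j
   along a maximal chain of join-irreducibles. *)
Lemma le_connect {k j} : join_irr k -> join_irr j -> k <= j -> connect hasseJ k j.
Proof.
move=> Jk; have [n] := ubnP (ideal_size j); elim: n j => // n IH j /ltnSE size_j Jj kj.
case: (eqVneq k j) => [->|nkj]; first exact: connect0.
have kltj : k < j by rewrite lt_neqAle nkj.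
have [c [/and3P [Jc kc cj] Hc]] := @ex_maximal _ _
  (fun c => [&& join_irr c, k <= c & c < j]) k ltac:(by rewrite /= Jk lexx kltj).
apply: connect_trans (IH c _ Jc kc) (connect1 _).
  exact: leq_trans (ideal_size_lt cj) size_j.
apply/orP; left; rewrite /coverJ Jc Jj cj; apply/forallP => c'.
apply/negP => /and3P [Jc' cc' c'j]; apply: (Hc c') => //.
by rewrite Jc' c'j (le_trans kc (ltW cc')).
Qed.

Lemma same_component_refl {a} : join_irr a -> same_component a a.
Proof. by move=> Ja; rewrite /same_component Ja connect0. Qed.

Lemma minimal_below {a b} : join_irr a -> same_component a b ->
  exists m, minimal_in_component a m /\ m <= b.
Proof.
move=> Ja Sb.
have [m [/andP [Sm mb] Hm]] := @ex_minimal _ _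
  (fun c => same_component a c && (c <= b)) b ltac:(by rewrite /= Sb lexx).
exists m; split => //; split => // c Sc cm.
apply/eqP; rewrite eq_le cm /=; apply/negP => mc.
apply: (Hm c); first by rewrite Sc (le_trans cm mb).
by rewrite lt_neqAle cm andbT; apply/eqP => ecm; move: mc; rewrite ecm lexx.
Qed.

(* Fact (a): a complemented element x does not cut any component, i.e. being
   below x is constant along the Hasse diagram of J(L). *)
Lemma compl_hasseJ_closed {x x'} : is_compl x x' -> closed hasseJ (fun t : L => t <= x).
Proof.
move=> [cI cU].
have side u v : join_irr u -> join_irr v -> u <= v -> (u <= x) = (v <= x).
  move=> Ju Jv uv; apply/idP/idP => [ux|]; last by move/(le_trans uv).
  have : v <= x `|` x' by rewrite cU lex1.
  case/(join_prime Jv) => // vx'; exfalso.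
  exact: (join_irr_below_disjoint Ju cI ux (le_trans uv vx')).
move=> u v; rewrite !unfold_in /= => /orP [] /and4P [Ju Jv uv _].
  exact/side/ltW.
exact/esym/side/ltW.
Qed.

Lemma components_compl {P : pred L} : closed hasseJ P ->
  is_compl (\join_(j | join_irr j && P j) j) (\join_(j | join_irr j && ~~ P j) j).
Proof.
move=> clP; split.
  apply: meet_bot_by_join_irr => k Jk kx kx'.
  have [j [/andP [Jj Pj] kj]] := join_prime_big Jk kx.
  have [j' [/andP [Jj' nPj'] kj']] := join_prime_big Jk kx'.
  have Cjj' : connect hasseJ j j'.
    by apply: connect_trans (le_connect Jk Jj' kj'); rewrite connect_hasseJC le_connect.
  by have := closed_connect clP Cjj'; rewrite !unfold_in Pj (negbTE nPj').
apply/eqP; rewrite eq_le lex1 /=; apply: le_by_join_irr => j Jj _.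
case Pj: (P j).
  by apply: le_trans (leUl _ _); apply: joins_sup; rewrite Jj Pj.
by apply: le_trans (leUr _ _); apply: joins_sup; rewrite Jj Pj.
Qed.

End HasseDiagram.

Section Characterisation.
Context {d : Order.disp_t} {L : finTBDistrLatticeType d}.
Implicit Types (x y z u v w j k a b m : L).

Definition unique_minimal_components : Prop :=
  forall a : L, join_irr a -> exists m : L, minimal_in_component a m /\
    forall m' : L, minimal_in_component a m' -> m' = m.

(* (=>): two minimal elements of one component are disjoint, so a complemented
   x separating them would cut the component, contradicting fact (a). *)
Lemma minimal_unique_of_cover {a m m'} :
  (forall y z : L, in_Ltilde y z -> exists x, complemented x /\ in_Lx x y z) ->
  join_irr a -> minimal_in_component a m -> minimal_in_component a m' -> m' = m.
Proof.
move=> cover Ja [/andP [_ Cam] Hm] [/andP [_ Cam'] Hm'].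
have Jm' := connect_join_irr Ja Cam'.
have Cmm' : connect hasseJ m m' by rewrite connect_hasseJC in Cam; exact: connect_trans Cam Cam'.
case: (eqVneq m' m) => [//|ne]; exfalso.
have disj : m `&` m' = \bot.
  apply: meet_bot_by_join_irr => k Jk km km'.
  have Sk : same_component a k.
    rewrite /same_component Ja (connect_trans Cam) // connect_hasseJC.
    exact: le_connect Jk (connect_join_irr Ja Cam) km.
  by move: ne; rewrite -(Hm k Sk km) -(Hm' k Sk km') eqxx.
have [x [_ [x' [cx [_ [mx m'x']]]]]] := cover m m' disj.
have := closed_connect (compl_hasseJ_closed cx) Cmm'.
rewrite !unfold_in /= mx => /esym m'x.
exact: join_irr_below_disjoint Jm' (proj1 cx) m'x m'x'.
Qed.

(* Under unique minimal elements, connected join-irreducibles share a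
   join-irreducible lower bound: the minimal element of their component. *)
Lemma common_lower_join_irr {j k} : unique_minimal_components ->
  join_irr j -> connect hasseJ j k -> exists m, join_irr m /\ m <= j /\ m <= k.
Proof.
move=> uniq_min Jj Cjk.
have [m1 [M1 m1j]] := minimal_below Jj (same_component_refl Jj).
have Sk : same_component j k by rewrite /same_component Jj.
have [m2 [M2 m2k]] := minimal_below Jj Sk.
have [m [_ Um]] := uniq_min j Jj.
have e12 : m1 = m2 by rewrite (Um _ M1) (Um _ M2).
case: M1 => /andP [_ Cjm1] _.
by exists m1; split; [exact: connect_join_irr Jj Cjm1 | rewrite {2}e12].
Qed.

Definition reaches (y : L) : pred L :=
  fun j => [exists j0, [&& join_irr j0, j0 <= y & connect hasseJ j0 j]].

Lemma reaches_closed y : closed hasseJ (reaches y).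
Proof.
have step u v : hasseJ u v -> reaches y u -> reaches y v.
  move=> huv /existsP [j0 /and3P [Jj0 j0y Cj0u]]; apply/existsP; exists j0.
  by rewrite Jj0 j0y (connect_trans Cj0u (connect1 huv)).
move=> u v huv; apply/idP/idP; first exact: step.
by apply: step; rewrite hasseJ_sym.
Qed.

(* (<=): the complemented element given by fact (b) for the components
   meeting y contains y and its complement contains z. *)
Lemma cover_of_unique_minimal y z : unique_minimal_components ->
  in_Ltilde y z -> exists x, complemented x /\ in_Lx x y z.
Proof.
move=> uniq_min yz.
have cx := components_compl (reaches_closed y).
eexists; split; first by eexists; exact: cx.
eexists; split; first exact: cx.
split; first by [].
split; apply: le_by_join_irr => j Jj jyz; apply: joins_sup; rewrite Jj /=.
  by apply/existsP; exists j; rewrite Jj jyz connect0.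
apply/negP => /existsP [j0 /and3P [Jj0 j0y Cj0j]].
have [m [Jm [mj0 mj]]] := common_lower_join_irr uniq_min Jj0 Cj0j.
exact: join_irr_below_disjoint Jm yz (le_trans mj0 j0y) (le_trans mj jyz).
Qed.

End Characterisation.

Theorem mainTheorem4 (d : Order.disp_t) (L : finTBDistrLatticeType d) :
  (forall y z : L, in_Ltilde y z <-> exists x : L, complemented x /\ in_Lx x y z)
  <->
  (forall a : L, join_irr a ->
     exists m : L, minimal_in_component a m /\
       forall m' : L, minimal_in_component a m' -> m' = m).
Proof.
split=> [cover a Ja | uniq_min y z].
- have [m [Mm _]] := minimal_below Ja (same_component_refl Ja).
  exists m; split => // m' Mm'.
  exact: minimal_unique_of_cover (fun y z => (cover y z).1) Ja Mm Mm'.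
- split; first exact: cover_of_unique_minimal.
  by case=> x [_ [x' [_ [yz _]]]].
Qed.
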